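(* Let $\mathbf P=(P,\leq,{}',0,1)$ be an orthogonal lub-complete poset and $\rightarrow\in\{\rightarrow_C,\rightarrow_K,\rightarrow_N,\rightarrow_S,\rightarrow_D\}$. Then the following conditions are equivalent: (i) (MPO) $x\leq y$ and $x\rightarrow y\leq u\rightarrow v$ imply $u\leq v$, for all $x,y,u,v\in P$. (ii) (OP) $x\leq y$ if and only if $x\rightarrow y=1$, for all $x,y\in P$.
   Context: $(P,\leq,{}',0,1)$ is a bounded poset with an antitone involution ${}'$; orthogonal means $x\leq y'$ implies $x\vee y$ exists; lub-complete means for every lower bound $x$ of a finite subset $M$ there is a maximal lower bound of $M$ above $x$. For $A\subseteq P$, $L(A)$, $U(A)$ are the lower and upper cones, $\mathrm{Max}\,A$, $\mathrm{Min}\,A$ the sets of maximal and minimal elements; joins/meets with sets are elementwise. The implications (operators $P^2\to 2^P$) are: $x\rightarrow_C y:=\mathrm{Min}\,U(x',y)$; $x\rightarrow_K y:=\mathrm{Max}\,L(x',y)\vee \mathrm{Max}\,L(x',y')\vee (x\wedge \mathrm{Min}\,U(x',y))$; $x\rightarrow_N y:=y'\rightarrow_K x'$; $x\rightarrow_S y:=x'\vee \mathrm{Max}\,L(x,y)$; $x\rightarrow_D y:=y'\rightarrow_S x'=y\vee \mathrm{Max}\,L(x',y')$. For sets, $A\leq B$ means $a\leq b$ for all $a\in A,b\in B$; ''$=1$'' means equal to $\{1\}$. *)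

From Stdlib Require Import List.

Record bposet_inv := BPosetInv {
  car :> Type;
  le : car -> car -> Prop;
  cmp : car -> car;
  zero : car;
  one : car;
  le_refl : forall x, le x x;
  le_antisym : forall x y, le x y -> le y x -> x = y;
  le_trans : forall x y z, le x y -> le y z -> le x z;
  le0x : forall x, le zero x;
  lex1 : forall x, le x one;
  cmpK : forall x, cmp (cmp x) = x;
  cmp_antitone : forall x y, le x y -> le (cmp y) (cmp x)
}.

Arguments le {b} _ _.
Arguments cmp {b} _.
Arguments zero {b}.
Arguments one {b}.

Section Defs.
Variable P : bposet_inv.

Definition pset := P -> Prop.

Definition is_join (x y z : P) : Prop :=
  le x z /\ le y z /\ forall w, le x w -> le y w -> le z w.
Definition is_meet (x y z : P) : Prop :=
  le z x /\ le z y /\ forall w, le w x -> le w y -> le w z.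

Definition Lc (A : pset) : pset := fun z => forall a, A a -> le z a.
Definition Uc (A : pset) : pset := fun z => forall a, A a -> le a z.
Definition pair (x y : P) : pset := fun z => z = x \/ z = y.
Definition sing (x : P) : pset := fun z => z = x.

Definition Maxs (A : pset) : pset :=
  fun z => A z /\ forall w, A w -> le z w -> w = z.
Definition Mins (A : pset) : pset :=
  fun z => A z /\ forall w, A w -> le w z -> w = z.

Definition setjoin (A B : pset) : pset :=
  fun z => exists a b, A a /\ B b /\ is_join a b z.
Definition setmeet (A B : pset) : pset :=
  fun z => exists a b, A a /\ B b /\ is_meet a b z.

Definition setle (A B : pset) : Prop :=
  forall a b, A a -> B b -> le a b.
Definition is_one (A : pset) : Prop := forall z, A z <-> z = one.

Definition orthogonal : Prop :=
  forall x y : P, le x (cmp y) -> exists z, is_join x y z.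

Definition lub_complete : Prop :=
  forall (M : list P) (x : P), Lc (fun m => In m M) x ->
    exists w, Maxs (Lc (fun m => In m M)) w /\ le x w.

Inductive impl_kind := ImpC | ImpK | ImpN | ImpS | ImpD.

Definition implC (x y : P) : pset := Mins (Uc (pair (cmp x) y)).
Definition implK (x y : P) : pset :=
  setjoin (setjoin (Maxs (Lc (pair (cmp x) y))) (Maxs (Lc (pair (cmp x) (cmp y)))))
          (setmeet (sing x) (Mins (Uc (pair (cmp x) y)))).
Definition implN (x y : P) : pset := implK (cmp y) (cmp x).
Definition implS (x y : P) : pset := setjoin (sing (cmp x)) (Maxs (Lc (pair x y))).
Definition implD (x y : P) : pset := setjoin (sing y) (Maxs (Lc (pair (cmp x) (cmp y)))).

Definition impl (k : impl_kind) : P -> P -> pset :=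
  match k with
  | ImpC => implC | ImpK => implK | ImpN => implN | ImpS => implS | ImpD => implD
  end.

Definition MPO (k : impl_kind) : Prop :=
  forall x y u v : P, le x y -> setle (impl k x y) (impl k u v) -> le u v.
Definition OP (k : impl_kind) : Prop :=
  forall x y : P, le x y <-> is_one (impl k x y).

End Defs.

From Stdlib Require Import List.

(* Everything is decided by the elements z with z' <= z.  Each of the five
   implications is nonempty everywhere (by orthogonality and lub-completeness),
   every value z of x -> y with x <= y satisfies z' <= z, and for such z we have
   z' -> z = {z}.  Moreover every {z} is some u -> v where u <= v forces z = 1
   (take 1 -> z, or z' ->_N 0).  So (MPO) applied to z' -> z <= u -> v gives
   z = 1 for every value of x -> y with x <= y, which is (OP); conversely, under
   (OP) the hypothesis x -> y <= u -> v of (MPO) says u -> v = {1}. *)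

Section BoundedPosetWithInvolution.

Variable P : bposet_inv.
Implicit Types (a b c t w z : P) (A B : pset P).

Lemma cmp_le_cmpK a b : le (cmp a) (cmp b) -> le b a.
Proof. intros H. rewrite <- (cmpK P a), <- (cmpK P b). now apply cmp_antitone. Qed.

Lemma le_cmp_sym a b : le a (cmp b) -> le b (cmp a).
Proof. intros H. apply cmp_le_cmpK. now rewrite cmpK. Qed.

Lemma cmp_le_sym a b : le (cmp a) b -> le (cmp b) a.
Proof. intros H. apply cmp_le_cmpK. now rewrite cmpK. Qed.

Lemma cmp0 : @cmp P zero = one.
Proof. apply le_antisym; [apply lex1 | apply le_cmp_sym, le0x]. Qed.

Lemma cmp1 : @cmp P one = zero.
Proof. now rewrite <- cmp0, cmpK. Qed.

Lemma le1_eq a : le one a -> a = one.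
Proof. intros H. apply le_antisym; [apply lex1 | exact H]. Qed.

Lemma cmp_le0_eq1 a : le (cmp a) zero -> a = one.
Proof. intros H. apply le1_eq. rewrite <- cmp0. now apply cmp_le_sym. Qed.

Lemma cmp_le_of_ub w z : le w z -> le (cmp w) z -> le (cmp z) z.
Proof. intros Hw Hcw. apply (le_trans P _ w); [now apply cmp_le_sym | exact Hw]. Qed.

Lemma Lc_pair a b z : Lc P (pair P a b) z <-> le z a /\ le z b.
Proof.
  split.
  - intros H. split; apply H; [left | right]; reflexivity.
  - intros [Ha Hb] w [-> | ->]; assumption.
Qed.

Lemma Uc_pair a b z : Uc P (pair P a b) z <-> le a z /\ le b z.
Proof.
  split.
  - intros H. split; apply H; [left | right]; reflexivity.
  - intros [Ha Hb] w [-> | ->]; assumption.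
Qed.

Lemma is_join_unique a b c c' : is_join P a b c -> is_join P a b c' -> c = c'.
Proof. intros [H1 [H2 H3]] [H1' [H2' H3']]. apply le_antisym; auto. Qed.

Lemma is_meet_unique a b c c' : is_meet P a b c -> is_meet P a b c' -> c = c'.
Proof. intros [H1 [H2 H3]] [H1' [H2' H3']]. apply le_antisym; auto. Qed.

Lemma is_join_le a b : le a b -> is_join P a b b.
Proof. intros H. repeat split; auto using le_refl. Qed.

Lemma is_join_ge a b : le b a -> is_join P a b a.
Proof. intros H. repeat split; auto using le_refl. Qed.

Lemma is_meet_le a b : le a b -> is_meet P a b a.
Proof. intros H. repeat split; auto using le_refl. Qed.

Lemma is_meet_ge a b : le b a -> is_meet P a b b.
Proof. intros H. repeat split; auto using le_refl. Qed.

Definition sub_sing A a : Prop := forall z, A z -> z = a.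

Lemma sub_sing_sing a : sub_sing (sing P a) a.
Proof. intros z Hz. exact Hz. Qed.

Lemma setle_sub_sing A B a : sub_sing A a -> sub_sing B a -> setle P A B.
Proof. intros HA HB z w Hz Hw. rewrite (HA z Hz), (HB w Hw). apply le_refl. Qed.

Lemma setjoin_sub_sing A B a b c :
  sub_sing A a -> sub_sing B b -> is_join P a b c -> sub_sing (setjoin P A B) c.
Proof.
  intros HA HB Hc z [a' [b' [Ha' [Hb' Hz]]]].
  rewrite (HA a' Ha'), (HB b' Hb') in Hz. exact (is_join_unique _ _ _ _ Hz Hc).
Qed.

Lemma setmeet_sub_sing A B a b c :
  sub_sing A a -> sub_sing B b -> is_meet P a b c -> sub_sing (setmeet P A B) c.
Proof.
  intros HA HB Hc z [a' [b' [Ha' [Hb' Hz]]]].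
  rewrite (HA a' Ha'), (HB b' Hb') in Hz. exact (is_meet_unique _ _ _ _ Hz Hc).
Qed.

Lemma maxL_pair_le a b : le a b -> sub_sing (Maxs P (Lc P (pair P a b))) a.
Proof.
  intros Hab m [Hm Hmax]. apply Lc_pair in Hm as [Hma _].
  symmetry. apply Hmax; [apply Lc_pair; split; auto using le_refl | exact Hma].
Qed.

Lemma maxL_pair_ge a b : le b a -> sub_sing (Maxs P (Lc P (pair P a b))) b.
Proof.
  intros Hba m [Hm Hmax]. apply Lc_pair in Hm as [_ Hmb].
  symmetry. apply Hmax; [apply Lc_pair; split; auto using le_refl | exact Hmb].
Qed.

Lemma minU_pair_le a b : le a b -> sub_sing (Mins P (Uc P (pair P a b))) b.
Proof.
  intros Hab c [Hc Hmin]. apply Uc_pair in Hc as [_ Hbc].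
  symmetry. apply Hmin; [apply Uc_pair; split; auto using le_refl | exact Hbc].
Qed.

Section Orthogonal.

Hypothesis HO : orthogonal P.

Lemma meet_exists a b : le (cmp a) b -> exists c, is_meet P a b c.
Proof.
  intros H. destruct (HO (cmp a) (cmp b)) as [j [Hj1 [Hj2 Hj3]]].
  { now rewrite cmpK. }
  exists (cmp j). repeat split.
  - now apply cmp_le_sym.
  - now apply cmp_le_sym.
  - intros w Hwa Hwb. apply le_cmp_sym, Hj3; now apply cmp_antitone.
Qed.

Lemma maxLc_absorb A a t :
  Maxs P (Lc P A) a -> Lc P A t -> le a (cmp t) -> le t a.
Proof.
  intros [Ha Hmax] Ht Hat. destruct (HO a t Hat) as [s [Has [Hts Hs]]].
  replace a with s; [exact Hts |].
  apply Hmax; [| exact Has].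
  intros m Hm. apply Hs; [apply Ha | apply Ht]; exact Hm.
Qed.

End Orthogonal.

Lemma maxL_pair_exists : lub_complete P ->
  forall a b, exists m, Maxs P (Lc P (pair P a b)) m.
Proof.
  intros HL a b.
  destruct (HL (a :: b :: nil) zero) as [m [[Hm Hmax] _]].
  { intros w _. apply le0x. }
  assert (Hpair : forall w, Lc P (fun w => In w (a :: b :: nil)) w <-> Lc P (pair P a b) w).
  { intros w. rewrite Lc_pair. split.
    - intros Hw. split; apply Hw; simpl; auto.
    - intros [Hwa Hwb] n [<- | [<- | []]]; assumption. }
  exists m. split; [now apply Hpair |].
  intros w Hw. apply Hmax. now apply Hpair.
Qed.

Lemma minU_pair_exists : lub_complete P ->
  forall a b, exists c, Mins P (Uc P (pair P a b)) c.
Proof.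
  intros HL a b. destruct (maxL_pair_exists HL (cmp a) (cmp b)) as [m [Hm Hmax]].
  apply Lc_pair in Hm as [Hma Hmb].
  exists (cmp m). split.
  - apply Uc_pair. split; now apply le_cmp_sym.
  - intros w Hw Hwm. apply Uc_pair in Hw as [Haw Hbw].
    rewrite <- (cmpK P w). f_equal. apply Hmax.
    + apply Lc_pair. split; now apply cmp_antitone.
    + now apply le_cmp_sym.
Qed.

End BoundedPosetWithInvolution.

Section Criterion.

Variables (P : bposet_inv) (k : impl_kind).

Hypothesis impl_nonempty : forall u v : P, exists z, impl P k u v z.
Hypothesis impl_le_cmp_le : forall x y z : P, le x y -> impl P k x y z -> le (cmp z) z.
Hypothesis impl_cmp_self : forall z : P, le (cmp z) z -> sub_sing P (impl P k (cmp z) z) z.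
Hypothesis impl_sing_detect :
  forall z : P, exists u v, sub_sing P (impl P k u v) z /\ (le u v -> z = one).

Lemma is_one_sub_sing (A : pset P) : (exists z, A z) -> sub_sing P A one -> is_one P A.
Proof.
  intros [z Hz] H1 w. split; [apply H1 |].
  intros ->. now rewrite <- (H1 z Hz).
Qed.

Lemma MPO_cmp_le_eq1 : MPO P k -> forall z : P, le (cmp z) z -> z = one.
Proof.
  intros HM z Hz. destruct (impl_sing_detect z) as [u [v [Huv Hdetect]]].
  apply Hdetect, (HM (cmp z) z); [exact Hz |].
  exact (setle_sub_sing P _ _ z (impl_cmp_self z Hz) Huv).
Qed.

Lemma MPO_OP : MPO P k -> OP P k.
Proof.
  intros HM x y. split.
  - intros Hxy. apply is_one_sub_sing; [apply impl_nonempty |].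
    intros z Hz. apply (MPO_cmp_le_eq1 HM). exact (impl_le_cmp_le x y z Hxy Hz).
  - intros H1. apply (HM zero zero); [apply le_refl |].
    intros a b _ Hb. apply H1 in Hb as ->. apply lex1.
Qed.

Lemma OP_MPO : OP P k -> MPO P k.
Proof.
  intros HOP x y u v Hxy Hle. apply HOP, is_one_sub_sing; [apply impl_nonempty |].
  intros b Hb. apply le1_eq, (Hle one b); [apply HOP; [exact Hxy | reflexivity] | exact Hb].
Qed.

Lemma MPO_iff_OP : MPO P k <-> OP P k.
Proof. split; [exact MPO_OP | exact OP_MPO]. Qed.

End Criterion.

Section Implications.

Variable P : bposet_inv.
Hypotheses (HO : orthogonal P) (HL : lub_complete P).
Implicit Types (u v x y z : P).

Lemma implK_nonempty u v : exists z, implK P u v z.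
Proof.
  destruct (maxL_pair_exists P HL (cmp u) v) as [a Ha].
  destruct (maxL_pair_exists P HL (cmp u) (cmp v)) as [b Hb].
  destruct (minU_pair_exists P HL (cmp u) v) as [c Hc].
  assert (Ha' := proj1 Ha); assert (Hb' := proj1 Hb); assert (Hc' := proj1 Hc).
  apply Lc_pair in Ha' as [Hau Hav]; apply Lc_pair in Hb' as [Hbu Hbv].
  apply Uc_pair in Hc' as [Huc _].
  destruct (HO a b) as [j Hj]; [apply (le_trans P _ v); [exact Hav | now apply le_cmp_sym] |].
  destruct (meet_exists P HO u c Huc) as [d Hd].
  destruct (HO j d) as [z Hz].
  { apply (le_trans P _ (cmp u)); [apply Hj; assumption | apply cmp_antitone, Hd]. }
  exists z, j, d. split; [exists a, b; auto |].
  split; [exists u, c; split; [reflexivity | auto] | exact Hz].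
Qed.

Lemma impl_nonempty k u v : exists z, impl P k u v z.
Proof.
  destruct k; simpl.
  - apply (minU_pair_exists P HL).
  - apply implK_nonempty.
  - apply implK_nonempty.
  - destruct (maxL_pair_exists P HL u v) as [m Hm].
    destruct (HO (cmp u) m) as [z Hz]; [apply cmp_antitone, (proj1 Hm); left; reflexivity |].
    exists z, (cmp u), m. split; [reflexivity | auto].
  - destruct (maxL_pair_exists P HL (cmp u) (cmp v)) as [m Hm].
    destruct (HO v m) as [z Hz]; [apply le_cmp_sym, (proj1 Hm); right; reflexivity |].
    exists z, v, m. split; [reflexivity | auto].
Qed.

Lemma implK_le_cmp_le x y z : le x y -> implK P x y z -> le (cmp z) z.
Proof.
  intros Hxy [j [d [[a [b [Ha [Hb Hj]]]] [[x' [c [Hx' [Hc Hd]]]] Hz]]]].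
  unfold sing in Hx'. subst x'.
  rewrite (maxL_pair_ge P _ _ (cmp_antitone P _ _ Hxy) b Hb) in Hj.
  assert (Hxc : le x c).
  { apply (le_trans P _ y); [exact Hxy | apply (proj1 Hc); right; reflexivity]. }
  rewrite (is_meet_unique P _ _ _ _ Hd (is_meet_le P _ _ Hxc)) in Hz.
  destruct Hz as [Hjz [Hxz _]]. destruct Hj as [Haj [Hyj _]].
  assert (Haz : le a z) by now apply (le_trans P _ j).
  assert (Hyz : le (cmp y) z) by now apply (le_trans P _ j).
  apply (le_trans P _ a); [| exact Haz].
  (* z' is a lower bound of x' and y, and a <= z = z'', so maximality of a absorbs z'. *)
  apply (maxLc_absorb P HO _ _ _ Ha); [| now rewrite cmpK].
  apply Lc_pair. split; [now apply cmp_antitone | now apply cmp_le_sym].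
Qed.

Lemma impl_le_cmp_le k x y z : le x y -> impl P k x y z -> le (cmp z) z.
Proof.
  intros Hxy. destruct k; simpl.
  - intros [Hz _]. apply Uc_pair in Hz as [Hxz Hyz].
    apply (cmp_le_of_ub P x); [now apply (le_trans P _ y) | exact Hxz].
  - now apply implK_le_cmp_le.
  - apply implK_le_cmp_le. now apply cmp_antitone.
  - intros [x' [m [Hx' [Hm [Hxz [Hmz _]]]]]]. unfold sing in Hx'. subst x'.
    rewrite (maxL_pair_le P _ _ Hxy m Hm) in Hmz.
    exact (cmp_le_of_ub P x z Hmz Hxz).
  - intros [y' [m [Hy' [Hm [Hyz [Hmz _]]]]]]. unfold sing in Hy'. subst y'.
    rewrite (maxL_pair_ge P _ _ (cmp_antitone P _ _ Hxy) m Hm) in Hmz.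
    exact (cmp_le_of_ub P y z Hyz Hmz).
Qed.

Lemma implK_cmp_self z : le (cmp z) z -> sub_sing P (implK P (cmp z) z) z.
Proof.
  intros Hz. unfold implK. rewrite cmpK.
  apply (setjoin_sub_sing P _ _ z (cmp z)); [| | exact (is_join_ge P _ _ Hz)].
  - apply (setjoin_sub_sing P _ _ z (cmp z)); [| | exact (is_join_ge P _ _ Hz)].
    + exact (maxL_pair_le P _ _ (le_refl P z)).
    + exact (maxL_pair_ge P _ _ Hz).
  - apply (setmeet_sub_sing P _ _ (cmp z) z); [| | exact (is_meet_le P _ _ Hz)].
    + apply sub_sing_sing.
    + exact (minU_pair_le P _ _ (le_refl P z)).
Qed.

Lemma implK_one z : sub_sing P (implK P one z) z.
Proof.
  unfold implK. rewrite cmp1.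
  apply (setjoin_sub_sing P _ _ zero z); [| | exact (is_join_le P _ _ (le0x P z))].
  - apply (setjoin_sub_sing P _ _ zero zero); [| | exact (is_join_le P _ _ (le_refl P zero))].
    + exact (maxL_pair_le P _ _ (le0x P z)).
    + exact (maxL_pair_le P _ _ (le0x P (cmp z))).
  - apply (setmeet_sub_sing P _ _ one z); [| | exact (is_meet_ge P _ _ (lex1 P z))].
    + apply sub_sing_sing.
    + exact (minU_pair_le P _ _ (le0x P z)).
Qed.

Lemma impl_cmp_self k z : le (cmp z) z -> sub_sing P (impl P k (cmp z) z) z.
Proof.
  intros Hz. destruct k; simpl.
  - unfold implC. rewrite cmpK. exact (minU_pair_le P _ _ (le_refl P z)).
  - now apply implK_cmp_self.
  - unfold implN. rewrite cmpK. now apply implK_cmp_self.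
  - unfold implS. rewrite cmpK.
    apply (setjoin_sub_sing P _ _ z (cmp z)); [apply sub_sing_sing | |].
    + exact (maxL_pair_le P _ _ Hz).
    + exact (is_join_ge P _ _ Hz).
  - unfold implD. rewrite cmpK.
    apply (setjoin_sub_sing P _ _ z (cmp z)); [apply sub_sing_sing | |].
    + exact (maxL_pair_ge P _ _ Hz).
    + exact (is_join_ge P _ _ Hz).
Qed.

Lemma impl_sing_detect k z :
  exists u v, sub_sing P (impl P k u v) z /\ (le u v -> z = one).
Proof.
  destruct k; simpl.
  - exists one, z. split; [| apply le1_eq].
    unfold implC. rewrite cmp1. exact (minU_pair_le P _ _ (le0x P z)).
  - exists one, z. split; [apply implK_one | apply le1_eq].
  - exists (cmp z), zero. split; [| apply cmp_le0_eq1].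
    unfold implN. rewrite cmp0, cmpK. apply implK_one.
  - exists one, z. split; [| apply le1_eq]. unfold implS. rewrite cmp1.
    apply (setjoin_sub_sing P _ _ zero z); [apply sub_sing_sing | |].
    + exact (maxL_pair_ge P _ _ (lex1 P z)).
    + exact (is_join_le P _ _ (le0x P z)).
  - exists one, z. split; [| apply le1_eq]. unfold implD. rewrite cmp1.
    apply (setjoin_sub_sing P _ _ z zero); [apply sub_sing_sing | |].
    + exact (maxL_pair_le P _ _ (le0x P (cmp z))).
    + exact (is_join_ge P _ _ (le0x P z)).
Qed.

End Implications.

Theorem theorem10 (P : bposet_inv) (k : impl_kind) :
  orthogonal P -> lub_complete P -> (MPO P k <-> OP P k).
Proof.
  intros HO HL. apply MPO_iff_OP.
  - exact (impl_nonempty P HO HL k).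
  - exact (impl_le_cmp_le P HO k).
  - apply impl_cmp_self.
  - apply impl_sing_detect.
Qed.
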